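(* Let $p$ be a prime with $p\equiv 1\pmod 4$ and let $\lambda$ be an integer with $p\nmid\lambda$. Let $a(p):=\#X_\lambda^4(\mathbb F_p)-p^2-1$ be the trace of Frobenius of the Dwork K3 surface $X_\lambda^4$ over $\mathbb F_p$ (with $\lambda$ reduced modulo $p$). Then $$a(p)\equiv \sum_{j=0}^{p-1}\frac{(\tfrac14)_j(\tfrac24)_j(\tfrac34)_j}{j!^3}\,\lambda^{-4j}\pmod p,$$ i.e. $a(p)$ is congruent modulo $p$ to the truncation at $p$ of the period $\pi={}_{3}F_{2}\left(\frac14,\frac24,\frac34;1,1\,\middle|\,\frac{1}{\lambda^4}\right)=\sum_{j\ge0}\frac{(\frac14)_j(\frac24)_j(\frac34)_j}{j!^3}\lambda^{-4j}$ of the surface.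
   Context: $X_\lambda^4$ is the Dwork K3 surface in $\mathbb P^3$ defined by $x_1^4+x_2^4+x_3^4+x_4^4=4\lambda x_1x_2x_3x_4$; $\#X_\lambda^4(\mathbb F_p)$ is its number of $\mathbb F_p$-rational points. $(a)_0=1$ and $(a)_j=a(a+1)\cdots(a+j-1)$. The congruence is in $\mathbb Z_{(p)}$ (the coefficients of the truncated sum are $p$-integral). *)

From HB Require Import structures.
From mathcomp Require Import all_boot all_order all_algebra all_field.
Set Implicit Arguments. Unset Strict Implicit. Unset Printing Implicit Defensive.
Import Order.TTheory GRing.Theory Num.Theory.
Local Open Scope ring_scope.

(* Normalized representatives of points of P^3(F_p): vectors whose first
   nonzero coordinate equals 1.  These are in bijection with P^3(F_p). *)
Definition proj_normalized (F : finFieldType) (x : {ffun 'I_4 -> F}) : bool :=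
  [exists i : 'I_4, (x i == 1) && [forall j : 'I_4, (j < i)%N ==> (x j == 0)]].

Definition dwork_eq (F : finFieldType) (lam : F) (x : {ffun 'I_4 -> F}) : bool :=
  \sum_(i < 4) x i ^+ 4 == 4%:R * lam * \prod_(i < 4) x i.

Definition dwork_count (p : nat) (lam : int) : nat :=
  #|[set x : {ffun 'I_4 -> 'F_p} | proj_normalized x && dwork_eq (lam%:~R) x]|.

Definition poch (a : rat) (j : nat) : rat := \prod_(k < j) (a + k%:R).

From HB Require Import structures.
From mathcomp Require Import all_boot all_order all_algebra all_field.
From mathcomp Require Import ring zify.
Set Implicit Arguments. Unset Strict Implicit. Unset Printing Implicit Defensive.
Import Order.TTheory GRing.Theory Num.Theory.
Local Open Scope ring_scope.

(* Write f for the Dwork quartic and F = F_p.  Counting the zeros of f in F^4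
   with the indicator 1 - f^(p-1), and using that the affine cone over the
   surface has 1 + (p-1) #X(F_p) points, gives
     #X(F_p) - 1 = sum_(x in F^4) f(x)^(p-1)   in F.
   Expand f^(p-1) multinomially: since sum_(y in F) y^e is -1 when e is a
   positive multiple of p-1 and 0 otherwise, only the monomial
   (x1 x2 x3 x4)^(p-1) survives.  It arises from
   (x1^4 + ... + x4^4)^(4j) (x1 x2 x3 x4)^(p-1-4j) with coefficient
   (4j)!/j!^4 * binomial(p-1, 4j) * (-4 lam)^(p-1-4j), which by Fermat and
   binomial(p-1, k) = (-1)^k is the j-th term of the truncated 3F2; the terms
   with 4j >= p vanish because (1/4)_j contains the factor p/4.  The rational
   identity is finally transported to F_p by reduction on Z_(p). *)

Lemma big_ord4 (R : Type) (idx : R) (op : Monoid.law idx) (f : 'I_4 -> R) :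
  \big[op/idx]_(i < 4) f i = op (f 0) (op (f 1) (op (f 2) (f 3))).
Proof.
rewrite !big_ord_recl big_ord0 Monoid.mulm1.
by congr (op (f _) (op (f _) (op (f _) (f _)))); apply: val_inj.
Qed.

Lemma forall_ord4 (P : 'I_4 -> bool) : [forall i, P i] = [&& P 0, P 1, P 2 & P 3].
Proof. by rewrite -(big_andE xpredT) big_ord4 /= !andbA. Qed.

Lemma sum_ord_only (V : nmodType) n (c : 'I_n) (f : 'I_n -> V) :
  (forall i, i != c -> f i = 0) -> \sum_i f i = f c.
Proof. by move=> f0; rewrite (bigD1 c) //= big1 ?addr0. Qed.

Lemma sum_ord_muln (V : nmodType) (d K : nat) (h : nat -> V) :
  (0 < d)%N -> (forall m, ~~ (d %| m)%N -> h m = 0) ->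
  \sum_(m < d * K) h m = \sum_(j < K) h (d * j)%N.
Proof.
move=> d_gt0 h_dvd; elim: K => [|K IHK]; first by rewrite muln0 !big_ord0.
rewrite big_ord_recr /= -IHK -!(big_mkord xpredT) mulnSr (big_cat_nat _ (leq_addr _ _)) //=.
have lt_dK : (d * K < d * K + d)%N by rewrite -[X in (X < _)%N]addn0 ltn_add2l.
congr (_ + _); rewrite big_ltn //.
rewrite [X in _ + X]big_nat_cond [X in _ + X]big1 ?addr0 //.
move=> m /andP[/andP[lo hi] _]; apply: h_dvd.
apply: contraL hi => /dvdnP[k m_eq]; rewrite -leqNgt; subst m.
by move: lo; rewrite -mulnSr [(k * d)%N]mulnC ltn_pmul2l // => lo; rewrite leq_pmul2l.
Qed.

Definition multinom4 (j : nat) : nat :=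
  ('C(4 * j, 3 * j) * 'C(3 * j, 2 * j) * 'C(2 * j, j))%N.

Definition quarter_prod (j : nat) : nat :=
  (\prod_(k < j) ((4 * k + 1) * (4 * k + 2) * (4 * k + 3)))%N.

Lemma fact_mul4 j : ((4 * j)`! = 4 ^ j * j`! * quarter_prod j)%N.
Proof.
elim: j => [|j IHj]; first by rewrite /quarter_prod big_ord0.
rewrite /quarter_prod big_ord_recr /= -/(quarter_prod j).
rewrite (_ : 4 * j.+1 = (4 * j).+4)%N; last by lia.
rewrite !factS IHj expnS; ring.
Qed.

Lemma multinom4_fact j : (multinom4 j * j`! ^ 4 = (4 * j)`!)%N.
Proof.
have bin_fact_mul k : ('C(k.+1 * j, k * j) * ((k * j)`! * j`!) = (k.+1 * j)`!)%N.
  by rewrite -[in j`!](addKn (k * j) j) -mulSnr bin_fact // leq_mul2r leqnSn orbT.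
rewrite -(bin_fact_mul 3) -(bin_fact_mul 2) -(bin_fact_mul 1) mul1n /multinom4.
ring.
Qed.

Lemma prime_ndvd_fact p j : prime p -> (j < p)%N -> ~~ (p %| j`!)%N.
Proof.
move=> p_pr; elim: j => [|j IHj] lt_jp; first by rewrite dvdn1 neq_ltn prime_gt1 ?orbT.
rewrite factS Euclid_dvdM // negb_or IHj 1?ltnW // andbT.
by apply: contraL lt_jp => /dvdn_leq; rewrite -leqNgt; apply.
Qed.

(* The exponents of x_0^4, ..., x_3^4 in the term (i1, i2, i3) of the nested
   binomial expansion of (x_0^4 + ... + x_3^4)^m. *)
Definition parts4 (m i1 i2 i3 : nat) : seq nat := [:: m - i1; i1 - i2; i2 - i3; i3]%N.

Lemma expr_quartic_sum_mul_prod (R : comNzRingType) (x : 'I_4 -> R) m b :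
  (\sum_i x i ^+ 4) ^+ m * (\prod_i x i) ^+ b =
  \sum_(i1 < m.+1) \sum_(i2 < i1.+1) \sum_(i3 < i2.+1)
    (\prod_i x i ^+ (4 * nth 0 (parts4 m i1 i2 i3) i + b)%N)
      *+ ('C(m, i1) * 'C(i1, i2) * 'C(i2, i3)).
Proof.
rewrite !big_ord4 exprDn mulr_suml; apply: eq_bigr => i1 _.
rewrite exprDn mulrnAl mulr_sumr mulr_suml -sumrMnl; apply: eq_bigr => i2 _.
rewrite exprDn mulr_sumr -sumrMnl mulr_sumr mulr_suml -sumrMnl; apply: eq_bigr => i3 _.
rewrite big_ord4 !mulrnAr !mulrnAl -!mulrnA.
congr (_ *+ _); last by rewrite mulnC (mulnC 'C(i1, i2)).
by rewrite /= !exprD !exprMn !expr0; ring.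
Qed.

Lemma parts4_exps_eq m b i1 i2 i3 : (i3 <= i2 <= i1)%N -> (i1 <= m)%N ->
  [forall i : 'I_4, 4 * nth 0 (parts4 m i1 i2 i3) i + b == m + b]%N =
  [&& 4 %| m, i1 == 3 * (m %/ 4), i2 == 2 * (m %/ 4) & i3 == m %/ 4]%N.
Proof.
move=> /andP[le32 le21] le1m; rewrite forall_ord4 /=.
by apply/and4P/and4P => -[/eqP h1 /eqP h2 /eqP h3 /eqP h4]; split; apply/eqP; lia.
Qed.

(** * Power sums over a finite field *)

Lemma natr_card_finField (F : finFieldType) : #|F|%:R = 0 :> F.
Proof.
have [p p_pr charFp] := finPcharP F.
have cardF : #|F| = (p ^ logn p #|F|)%N := card_pprimeChar charFp.
have logF_gt0 : (0 < logn p #|F|)%N.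
  by rewrite lt0n; apply: contraTneq (finNzRing_gt1 F) => k0; rewrite cardF k0.
by rewrite cardF natrX (pcharf0 charFp) expr0n gtn_eqF.
Qed.

Section FinFieldSums.
Variable F : finFieldType.
Local Notation q := #|F|.

Lemma card_finField_pred_gt0 : (0 < q.-1)%N.
Proof. by rewrite -subn1 subn_gt0 finNzRing_gt1. Qed.

Lemma natr_card_finField_pred : q.-1%:R = -1 :> F.
Proof.
apply/eqP; rewrite -subr_eq0 opprK natr1 prednK ?natr_card_finField //.
by rewrite ltnW // finNzRing_gt1.
Qed.

Lemma expf_card_pred (x : F) : x != 0 -> x ^+ q.-1 = 1.
Proof.
move=> x0; apply: (mulfI x0).
by rewrite -exprS prednK ?expf_card ?mulr1 // ltnW ?finNzRing_gt1.
Qed.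

Lemma sum_expr_finField e :
  \sum_(y : F) y ^+ e = if (0 < e)%N && (q.-1 %| e)%N then -1 else 0.
Proof.
case: e => [|e] /=.
  by rewrite (eq_bigr (fun _ => 1)) // sumr_const natr_card_finField.
case: ifP => dvd_e.
  rewrite (bigD1 0) //= expr0n add0r (eq_bigr (fun _ => 1)); last first.
    by move=> y y0; rewrite -(divnK dvd_e) mulnC exprM expf_card_pred // expr1n.
  by rewrite sumr_const cardC1 natr_card_finField_pred.
have units_unity : all q.-1.-unity_root (enum (predC1 (0 : F))).
  by apply/allP => x; rewrite mem_enum unity_rootE => x0; rewrite expf_card_pred.
have size_units : (q.-1 <= size (enum (predC1 (0%R : F))))%N by rewrite -cardE cardC1.
have [g _ g_prim] := hasP (cyclic.has_prim_root card_finField_pred_gt0 units_unity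
  (enum_uniq _) size_units).
have g0 : g != 0 by rewrite (prim_root_eq0 g_prim) -lt0n card_finField_pred_gt0.
have ge_neq1 : g ^+ e.+1 != 1.
  by rewrite -(expr0 g) (eq_prim_root_expr g_prim) mod0n -/(dvdn q.-1 e.+1) dvd_e.
(* Multiplying by a generator g of F^* permutes F and scales the sum by g^(e+1) != 1. *)
set S := \sum_y _.
have S_invariant : S = g ^+ e.+1 * S.
  rewrite {1}/S (reindex_inj (mulfI g0)) mulr_sumr.
  by apply: eq_bigr => y _; rewrite exprMn.
apply/eqP; move/eqP: S_invariant.
by rewrite -{1}[S]mul1r -subr_eq0 -mulrBl mulf_eq0 subr_eq0 eq_sym (negbTE ge_neq1).
Qed.

Lemma card_zeros_finField (T : finType) (f : T -> F) :
  #|[set x | f x == 0]|%:R = \sum_x (1 - f x ^+ q.-1).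
Proof.
rewrite -sumr_const big_mkcond /=; apply: eq_bigr => x _; rewrite inE.
have [->|/eqP fx0] := eqP; last by rewrite expf_card_pred ?subrr.
by rewrite expr0n gtn_eqF ?subr0 ?card_finField_pred_gt0.
Qed.

Lemma sum_ffun_prod_expr k (e : 'I_k -> nat) :
  \sum_(x : {ffun 'I_k -> F}) \prod_i x i ^+ e i = \prod_i \sum_(y : F) y ^+ e i.
Proof. by rewrite bigA_distr_bigA. Qed.

Lemma prod_sum_expr_finField k (e : 'I_k -> nat) : (\sum_i e i = k * q.-1)%N ->
  \prod_i \sum_(y : F) y ^+ e i = if [forall i, e i == q.-1] then (-1) ^+ k else 0.
Proof.
move=> sum_e; under eq_bigr => i _ do rewrite sum_expr_finField.
case: ifP => [/forallP e_eq | not_all_eq].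
  under eq_bigr => i _ do rewrite (eqP (e_eq i)) card_finField_pred_gt0 dvdnn.
  by rewrite prodr_const card_ord.
case: (boolP [forall i, (0 < e i) && (q.-1 %| e i)]%N) => [/forallP e_mul | ]; last first.
  by rewrite negb_forall => /existsP[i /negbTE e_i]; rewrite (bigD1 i) //= e_i mul0r.
have e_ge i : (q.-1 <= e i)%N by have /andP[e_gt0 /dvdn_leq] := e_mul i; apply.
have /forallP e_eq : [forall (i | true), e i - q.-1 == 0]%N.
  by rewrite -sum_nat_eq0 sumnB // sum_e sum_nat_const card_ord subnn.
case/negP: not_all_eq; apply/forallP => i.
by rewrite eqn_leq e_ge andbT -subn_eq0; exact: e_eq.
Qed.

Lemma sum_quartic_sum_mul_prod m b : (m + b = q.-1)%N ->
  \sum_(x : {ffun 'I_4 -> F}) (\sum_i x i ^+ 4) ^+ m * (\prod_i x i) ^+ b =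
  if (4 %| m)%N then (multinom4 (m %/ 4))%:R else 0.
Proof.
move=> mb; set a := (m %/ 4)%N.
pose c i1 i2 i3 := [&& 4 %| m, i1 == 3 * a, i2 == 2 * a & i3 == a]%N.
transitivity (\sum_(i1 < m.+1) \sum_(i2 < i1.+1) \sum_(i3 < i2.+1)
    (if c i1 i2 i3 then 1 else 0 : F) *+ ('C(m, i1) * 'C(i1, i2) * 'C(i2, i3))).
  under eq_bigr => x _ do rewrite expr_quartic_sum_mul_prod.
  rewrite exchange_big; apply: eq_bigr => i1 _; rewrite exchange_big.
  apply: eq_bigr => i2 _; rewrite exchange_big; apply: eq_bigr => i3 _.
  have le32 : (i3 <= i2)%N by rewrite -ltnS.
  have le21 : (i2 <= i1)%N by rewrite -ltnS.
  have le1m : (i1 <= m)%N by rewrite -ltnS.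
  rewrite sumrMnl sum_ffun_prod_expr prod_sum_expr_finField; last first.
    by rewrite big_ord4 /= -mb; lia.
  by rewrite -mb parts4_exps_eq ?le32 // -signr_odd expr0.
have [dvd_m | ndvd_m] := boolP (4 %| m)%N; last first.
  by do 3!(apply: big1 => ? _); rewrite /c (negbTE ndvd_m) mul0rn.
have m_eq : m = (4 * a)%N by rewrite mulnC divnK.
have lt3a : (3 * a < m.+1)%N by rewrite ltnS m_eq leq_mul2r leqnSn orbT.
rewrite (@sum_ord_only _ _ (Ordinal lt3a)) => [|i1 i1_neq]; last first.
  by do 2!(apply: big1 => ? _); rewrite /c (negbTE (i1_neq : i1 != 3 * a :> nat)) andbF mul0rn.
have lt2a : (2 * a < (3 * a).+1)%N by rewrite ltnS leq_mul2r leqnSn orbT.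
rewrite (@sum_ord_only _ _ (Ordinal lt2a)) => [|i2 i2_neq]; last first.
  by apply: big1 => ? _; rewrite /c (negbTE (i2_neq : i2 != 2 * a :> nat)) !andbF mul0rn.
have lta : (a < (2 * a).+1)%N by rewrite ltnS leq_pmull.
rewrite (@sum_ord_only _ _ (Ordinal lta)) => [|i3 i3_neq]; last first.
  by rewrite /c (negbTE (i3_neq : i3 != a :> nat)) !andbF mul0rn.
by rewrite /c dvd_m !eqxx /multinom4 -m_eq.
Qed.

End FinFieldSums.

(** * Points of a projective hypersurface *)

Definition scalev (R : nzRingType) k (t : R) (x : {ffun 'I_k -> R}) : {ffun 'I_k -> R} :=
  [ffun i => t * x i].

Lemma proj_normalizedP (F : finFieldType) (x : {ffun 'I_4 -> F}) :
  reflect (exists i : 'I_4, x i = 1 /\ forall j : 'I_4, (j < i)%N -> x j = 0)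
          (proj_normalized x).
Proof.
apply: (iffP existsP) => [[i /andP[/eqP xi /forallP x0]] | [i [xi x0]]].
  by exists i; split=> // j lt_ji; apply/eqP; exact: implyP (x0 j) lt_ji.
by exists i; rewrite xi eqxx; apply/forallP => j; apply/implyP => /x0 ->.
Qed.

Lemma first_nonzero_coord (F : fieldType) k (x : {ffun 'I_k -> F}) : x != 0 ->
  exists i : 'I_k, x i != 0 /\ forall j : 'I_k, (j < i)%N -> x j = 0.
Proof.
move=> x_neq0; have [i xi] : exists i, x i != 0.
  apply/existsP; apply: contraR x_neq0 => /existsPn x0.
  by apply/eqP/ffunP => i; rewrite ffunE; apply/eqP/negPn/x0.
exists [arg min_(j < i | x j != 0) j]; case: arg_minnP => // j xj j_min; split=> // l lt_lj.
by apply/eqP; apply: contraTT lt_lj => /j_min; rewrite -leqNgt.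
Qed.

Lemma scalev_normalized_inj (F : finFieldType) (t t' : F) (v v' : {ffun 'I_4 -> F}) :
  t != 0 -> proj_normalized v -> proj_normalized v' -> scalev t v = scalev t' v' ->
  (t, v) = (t', v').
Proof.
move=> t0 /proj_normalizedP[i [vi v0]] /proj_normalizedP[i' [vi' v0']] eq_tv.
have E k : t * v k = t' * v' k.
  by have := congr1 (fun g : {ffun _ -> F} => g k) eq_tv; rewrite !ffunE.
have t'0 : t' != 0.
  by apply: contra_neq t0 => t'0; have := E i; rewrite vi t'0 mul0r mulr1.
have ii' : i = i'.
  apply: val_inj; apply/eqP; case: ltngtP => // lt_ii.
    by have := E i; rewrite vi v0' // mulr1 mulr0 => /eqP; rewrite (negbTE t0).
  by have := E i'; rewrite vi' v0 // mulr1 mulr0 => /esym/eqP; rewrite (negbTE t'0).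
subst i'; have tt' : t = t' by have := E i; rewrite vi vi' !mulr1.
by subst t'; congr (_, _); apply/ffunP => k; apply: (mulfI t0).
Qed.

Section ProjectiveZeros.
Variables (F : finFieldType) (d : nat) (f : {ffun 'I_4 -> F} -> F).
Hypotheses (d_gt0 : (0 < d)%N) (f_homog : forall t x, f (scalev t x) = t ^+ d * f x).
Local Notation q := #|F|.

Lemma card_affine_zeros :
  #|[set x | f x == 0]| = 1 + q.-1 * #|[set x | proj_normalized x && (f x == 0%R)]|.
Proof.
set Z := [set x | f x == 0]; set N := [set x | _ && _].
set zero := (0 : {ffun 'I_4 -> F}).
have f0 : f 0 = 0.
  have scale00 : scalev 0 (0 : {ffun 'I_4 -> F}) = 0 by apply/ffunP => i; rewrite !ffunE mul0r.
  by rewrite -scale00 f_homog expr0n gtn_eqF // mul0r.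
have fscale_eq0 t x : t != 0 -> (f (scalev t x) == 0) = (f x == 0).
  by move=> t0; rewrite f_homog mulf_eq0 expf_eq0 (negbTE t0) andbF.
have Z_scaled : Z :\ zero = [set scalev u.1 u.2 | u in setX [set~ (0 : F)] N].
  apply/setP => x; rewrite !inE; apply/idP/imsetP => [/andP[x_neq0 fx0] | [[t v]]].
    have [i [xi x0]] := first_nonzero_coord x_neq0.
    exists (x i, scalev (x i)^-1 x); last first.
      by apply/ffunP => k; rewrite !ffunE mulrA mulfV ?mul1r.
    rewrite !inE xi fscale_eq0 ?invr_eq0 // fx0 andbT; apply/proj_normalizedP.
    by exists i; split=> [|j /x0 xj]; rewrite ffunE ?mulVf ?xj ?mulr0.
  rewrite !inE /= => /andP[t0 /andP[/proj_normalizedP[i [vi _]] fv0]] ->.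
  rewrite fscale_eq0 // fv0 andbT; apply: contra_neq t0 => tv0.
  by have := congr1 (fun g : {ffun _ -> F} => g i) tv0; rewrite /zero !ffunE vi mulr1 => ->.
rewrite (cardsD1 zero Z) inE f0 eqxx Z_scaled card_in_imset; last first.
  move=> [t v] [t' v']; rewrite !inE /= => /andP[t0 /andP[nv _]] /andP[_ /andP[nv' _]].
  exact: scalev_normalized_inj.
by rewrite cardsX cardsC1.
Qed.

Lemma card_proj_zeros_finField :
  #|[set x | proj_normalized x && (f x == 0)]|%:R - 1 = \sum_x f x ^+ q.-1.
Proof.
have := card_zeros_finField f; rewrite card_affine_zeros natrD natrM natr_card_finField_pred.
rewrite sumrB sumr_const card_ffun card_ord natrX natr_card_finField expr0n /= sub0r.
by rewrite mulN1r => /(canLR (@opprK _)) <-; rewrite opprB.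
Qed.

End ProjectiveZeros.

(** * The Dwork quartic modulo p *)

Lemma bin_pred_pcharf (R : nzRingType) p k : p \in [pchar R] -> (k <= p.-1)%N ->
  'C(p.-1, k)%:R = (-1) ^+ k :> R.
Proof.
move=> charRp.
have p_gt0 : (0 < p)%N := prime_gt0 (pcharf_prime charRp).
elim: k => [|k IHk] lt_kp; first by rewrite bin0 expr0.
have : 'C(p, k.+1)%:R = 0 :> R by apply: bin_lt_pcharf_0; rewrite // -ltn_predRL.
rewrite -[p in 'C(p, _)](prednK p_gt0) binS natrD IHk ?(ltnW lt_kp) // => /eqP.
by rewrite addr_eq0 => /eqP ->; rewrite exprS mulN1r.
Qed.

Definition pochr (R : nzRingType) (a : R) (j : nat) : R := \prod_(k < j) (a + k%:R).

Lemma pochr_quarter (F : fieldType) (a j : nat) : 4%:R != 0 :> F ->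
  pochr (a%:R / 4%:R : F) j = (\prod_(k < j) (4 * k + a))%N%:R / 4%:R ^+ j.
Proof.
move=> four_neq0; elim: j => [|j IHj]; first by rewrite /pochr !big_ord0 expr0 divr1.
rewrite /pochr !big_ord_recr /= -/(pochr _ j) IHj natrM exprS natrD natrM.
by field; rewrite four_neq0 expf_neq0.
Qed.

Definition dwork_poly (R : comNzRingType) (lam : R) (x : {ffun 'I_4 -> R}) : R :=
  \sum_i x i ^+ 4 - 4%:R * lam * \prod_i x i.

Lemma dwork_poly_scale (R : comNzRingType) (lam t : R) x :
  dwork_poly lam (scalev t x) = t ^+ 4 * dwork_poly lam x.
Proof. by rewrite /dwork_poly /scalev !big_ord4 /= !ffunE; ring. Qed.

Lemma dwork_eqE (F : finFieldType) (lam : F) x : dwork_eq lam x = (dwork_poly lam x == 0).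
Proof. by rewrite /dwork_eq /dwork_poly subr_eq0. Qed.

(* At [R = rat], [pochr] is [poch] and this is the summand of the truncated 3F2. *)
Definition dwork_term (R : unitRingType) (lam : R) (j : nat) : R :=
  pochr (1 / 4%:R) j * pochr (2%:R / 4%:R) j * pochr (3%:R / 4%:R) j
    / (j`!)%:R ^+ 3 * lam ^- (4 * j).

Lemma dwork_term_quarter_prod (F : fieldType) (lam : F) j : 4%:R != 0 :> F ->
  dwork_term lam j = (quarter_prod j)%:R / (4%:R ^+ j) ^+ 3 / (j`!)%:R ^+ 3 * lam ^- (4 * j).
Proof.
move=> four_neq0; rewrite /dwork_term -[in 1 / _](mulr1n 1) !pochr_quarter //.
rewrite /quarter_prod !big_split /= !natrM; congr (_ / _ * _).
by field; rewrite expf_neq0.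
Qed.

Section DworkModp.
Variable p : nat.
Hypothesis p_pr : prime p.
Local Notation F := 'F_p.
Local Notation n := p.-1.

Lemma card_Fp_pred : #|F|.-1 = n. Proof. by rewrite card_Fp. Qed.

Lemma four_Fp_neq0 : (p %% 4 = 1)%N -> 4%:R != 0 :> F.
Proof.
move=> p_mod4; rewrite -(dvdn_pcharf (pchar_Fp p_pr)).
have := prime_gt1 p_pr; apply: contraTN => /dvdn_leq le_p4; have := le_p4 isT; lia.
Qed.

Lemma sum_dwork_poly_expand (lam : F) :
  \sum_x dwork_poly lam x ^+ n =
  \sum_(m < n.+1) ((- (4%:R * lam)) ^+ (n - m) *
    (if (4 %| m)%N then (multinom4 (m %/ 4))%:R else 0)) *+ 'C(n, n - m).
Proof.
under eq_bigr => x _ do rewrite /dwork_poly -mulrA -mulNr exprDn.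
rewrite exchange_big (reindex_inj rev_ord_inj); apply: eq_bigr => m _ /=.
have le_mn : (m <= n)%N by rewrite -ltnS.
rewrite subSS subKn // sumrMnl; congr (_ *+ _).
rewrite -(@sum_quartic_sum_mul_prod _ m (n - m)) ?card_Fp_pred ?subnKC //.
by rewrite (@mulr_sumr F); apply: eq_bigr => x _; rewrite mulrA exprMn mulrCA mulNr.
Qed.

Lemma expf_Fp_pred (x : F) : x != 0 -> x ^+ n = 1.
Proof. by rewrite -card_Fp_pred; apply: expf_card_pred. Qed.

Lemma dwork_term_binomial (lam : F) j : (p %% 4 = 1)%N -> lam != 0 -> (4 * j <= n)%N ->
  ((- (4%:R * lam)) ^+ (n - 4 * j) * (multinom4 j)%:R) *+ 'C(n, n - 4 * j) = dwork_term lam j.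
Proof.
move=> p_mod4 lam0 le_4jn; have four0 := four_Fp_neq0 p_mod4.
have fact0 : (j`!)%:R != 0 :> F.
  by rewrite -(dvdn_pcharf (pchar_Fp p_pr)) prime_ndvd_fact //; move: le_4jn; lia.
have c0 : 4%:R * lam != 0 :> F by rewrite mulf_neq0.
have multinom4E : (multinom4 j)%:R = 4%:R ^+ j * (quarter_prod j)%:R / (j`!)%:R ^+ 3 :> F.
  apply: (mulIf (expf_neq0 4 fact0)); rewrite -[in LHS]natrX -[LHS]natrM multinom4_fact.
  by rewrite fact_mul4 !natrM natrX; field; rewrite fact0.
have fermat : (4%:R * lam) ^+ (n - 4 * j) = ((4%:R * lam) ^+ (4 * j))^-1 :> F.
  by apply: (mulIf (expf_neq0 (4 * j) c0)); rewrite -exprD subnK // expf_Fp_pred ?mulVf ?expf_neq0.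
rewrite -mulr_natr bin_pred_pcharf ?leq_subr ?pchar_Fp // mulrAC -exprMn mulrN1 opprK.
rewrite fermat multinom4E dwork_term_quarter_prod //.
rewrite exprMn -!exprM !(mulnC 4) !exprM.
by field; rewrite fact0 !expf_neq0.
Qed.

Lemma dwork_term_vanish (lam : F) j : (p %% 4 = 1)%N -> (p <= 4 * j)%N -> dwork_term lam j = 0.
Proof.
move=> p_mod4 le_p4j; have four0 := four_Fp_neq0 p_mod4.
have lt_k : (n %/ 4 < j)%N by lia.
(* Since p = 1 + 4 (n %/ 4), the factor of (1/4)_j at k = n %/ 4 is p/4 = 0. *)
have factor0 : 1 / 4%:R + (n %/ 4)%:R = 0 :> F.
  have n_eq : (n %/ 4 * 4 = n)%N by apply: divnK; apply/dvdnP; exists (p %/ 4)%N; lia.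
  have n_neg1 : (n %/ 4)%:R * 4%:R = -1 :> F.
    by rewrite -natrM n_eq -card_Fp_pred natr_card_finField_pred.
  apply: (mulIf four0).
  by rewrite mul0r mulrDl div1r mulVf // n_neg1 subrr.
by rewrite /dwork_term /pochr (bigD1 (Ordinal lt_k)) //= factor0 !mul0r.
Qed.

Lemma sum_dwork_poly_pow (lam : F) : (p %% 4 = 1)%N -> lam != 0 ->
  \sum_x dwork_poly lam x ^+ n = \sum_(j < p) dwork_term lam j.
Proof.
move=> p_mod4 lam0; have p_gt0 := prime_gt0 p_pr.
pose h m := if (m < p)%N then
  ((- (4%:R * lam)) ^+ (n - m) * (if (4 %| m)%N then (multinom4 (m %/ 4))%:R else 0))
    *+ 'C(n, n - m)
  else 0.
transitivity (\sum_(m < n.+1) h m).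
  rewrite sum_dwork_poly_expand; apply: eq_bigr => m _.
  by rewrite /h (leq_trans (ltn_ord m)) // prednK.
rewrite (big_ord_widen (4 * p) h); last by rewrite prednK //; lia.
have -> : \sum_(m < 4 * p | (m < n.+1)%N) h m = \sum_(m < 4 * p) h m.
  by rewrite big_mkcond; apply: eq_bigr => m _; rewrite /h prednK //; case: ltnP.
rewrite sum_ord_muln // => [|m ndvd_m]; last by rewrite /h (negbTE ndvd_m) mulr0 mul0rn; case: ifP.
apply: eq_bigr => j _; rewrite /h mulKn //.
case: ifP => [lt_4jp | /negbT]; first by rewrite dvdn_mulr // dwork_term_binomial // -ltnS prednK.
by rewrite -leqNgt => le_p4j; rewrite dwork_term_vanish.
Qed.

Lemma card_dwork_modp (lam : F) : (p %% 4 = 1)%N -> lam != 0 ->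
  #|[set x : {ffun 'I_4 -> F} | proj_normalized x && dwork_eq lam x]|%:R - 1 =
  \sum_(j < p) dwork_term lam j.
Proof.
move=> p_mod4 lam0; rewrite -sum_dwork_poly_pow // -card_Fp_pred.
under eq_finset => x do rewrite dwork_eqE.
exact: card_proj_zeros_finField (isT : (0 < 4)%N) (dwork_poly_scale lam).
Qed.
End DworkModp.

(** * Reduction of p-integral rationals *)

Lemma denq_intr_div_dvdz (k d : int) : d != 0 -> (denq (k%:~R / d%:~R) %| d)%Z.
Proof.
set s := k%:~R / d%:~R => d0.
have cross : numq s * d = k * denq s.
  apply: (@intr_inj rat); rewrite !rmorphM /= numqE -mulrA mulrCA.
  by rewrite divfK ?intr_eq0 // mulrC.
rewrite -(@Gauss_dvdzr _ (numq s)); first by apply/dvdzP; exists k; rewrite cross mulrC.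
by rewrite coprimezE coprime_sym coprime_num_den.
Qed.

Section ReductionModp.
Variable p : nat.
Hypothesis p_pr : prime p.

(* [r] lies in the localization Z_(p) and [u] is its residue class. *)
Definition reduces_modp (r : rat) (u : 'F_p) : Prop :=
  exists z d : int, [/\ coprime `|d| p, r = z%:~R / d%:~R & u = z%:~R / d%:~R].

Lemma intr_Fp_eq0 (z : int) : (z%:~R == 0 :> 'F_p) = (p %| z)%Z.
Proof. by rewrite (dvdz_pcharf (pchar_Fp p_pr)). Qed.

Lemma coprime_intr_Fp_neq0 (d : int) : coprime `|d| p -> d%:~R != 0 :> 'F_p.
Proof. by rewrite intr_Fp_eq0 coprime_sym prime_coprime. Qed.

Lemma coprime_intr_rat_neq0 (d : int) : coprime `|d| p -> d%:~R != 0 :> rat.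
Proof.
apply: contraTneq => /eqP; rewrite intr_eq0 => /eqP ->.
by rewrite /coprime gcd0n; case: eqP (prime_gt1 p_pr) => // ->.
Qed.

Lemma reduces_modp_int (z : int) : reduces_modp z%:~R z%:~R.
Proof. by exists z, 1; rewrite !divr1 coprime1n. Qed.

Lemma reduces_modp_nat (k : nat) : reduces_modp k%:R k%:R.
Proof. by rewrite !pmulrn; apply: reduces_modp_int. Qed.

Lemma reduces_modp_add r1 u1 r2 u2 :
  reduces_modp r1 u1 -> reduces_modp r2 u2 -> reduces_modp (r1 + r2) (u1 + u2).
Proof.
move=> [z1 [d1 [cop1 -> ->]]] [z2 [d2 [cop2 -> ->]]].
exists (z1 * d2 + z2 * d1), (d1 * d2); split; first by rewrite abszM coprimeMl cop1 cop2.
  by rewrite !rmorphD !rmorphM /=; field; rewrite !coprime_intr_rat_neq0.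
by rewrite !rmorphD !rmorphM /=; field; rewrite !coprime_intr_Fp_neq0.
Qed.

Lemma reduces_modp_mul r1 u1 r2 u2 :
  reduces_modp r1 u1 -> reduces_modp r2 u2 -> reduces_modp (r1 * r2) (u1 * u2).
Proof.
move=> [z1 [d1 [cop1 -> ->]]] [z2 [d2 [cop2 -> ->]]].
exists (z1 * z2), (d1 * d2); split; first by rewrite abszM coprimeMl cop1 cop2.
  by rewrite !rmorphM /=; field; rewrite !coprime_intr_rat_neq0.
by rewrite !rmorphM /=; field; rewrite !coprime_intr_Fp_neq0.
Qed.

Lemma reduces_modp_opp r u : reduces_modp r u -> reduces_modp (- r) (- u).
Proof. by move=> [z [d [cop -> ->]]]; exists (- z), d; rewrite !rmorphN !mulNr. Qed.

Lemma reduces_modp_inv r u : reduces_modp r u -> u != 0 -> reduces_modp r^-1 u^-1.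
Proof.
move=> [z [d [cop -> ->]]]; rewrite mulf_eq0 invr_eq0 negb_or intr_Fp_eq0 => /andP[p_ndvd_z _].
by exists d, z; rewrite !invf_div; split=> //; rewrite coprime_sym prime_coprime.
Qed.

Lemma reduces_modp_exp r u k : reduces_modp r u -> reduces_modp (r ^+ k) (u ^+ k).
Proof.
move=> red; elim: k => [|k IHk]; first exact: (reduces_modp_int 1).
by rewrite !exprS; apply: reduces_modp_mul.
Qed.

Lemma reduces_modp_sum (I : finType) (r : I -> rat) (u : I -> 'F_p) :
  (forall i, reduces_modp (r i) (u i)) -> reduces_modp (\sum_i r i) (\sum_i u i).
Proof.
move=> red; apply: (big_ind2 reduces_modp) => //; first exact: (reduces_modp_int 0).
exact: reduces_modp_add.
Qed.

Lemma reduces_modp_prod (I : finType) (r : I -> rat) (u : I -> 'F_p) :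
  (forall i, reduces_modp (r i) (u i)) -> reduces_modp (\prod_i r i) (\prod_i u i).
Proof.
move=> red; apply: (big_ind2 reduces_modp) => //; first exact: (reduces_modp_int 1).
exact: reduces_modp_mul.
Qed.

Lemma reduces_modp0 r : reduces_modp r 0 -> exists s : rat, coprime `|denq s| p /\ r = p%:R * s.
Proof.
move=> [z [d [cop -> /esym/eqP]]].
rewrite mulf_eq0 invr_eq0 (negbTE (coprime_intr_Fp_neq0 cop)) orbF intr_Fp_eq0.
case/dvdzP => [k ->]; exists (k%:~R / d%:~R); split; last first.
  by rewrite rmorphM /= mulrAC mulrC -[p%:~R]/(p%:R).
have d0 : d != 0 by rewrite -(intr_eq0 rat) coprime_intr_rat_neq0.
exact: coprime_dvdl (denq_intr_div_dvdz k d0) cop.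
Qed.

Lemma reduces_modp_pochr a u j : reduces_modp a u -> reduces_modp (pochr a j) (pochr u j).
Proof.
by move=> red; apply: reduces_modp_prod => k; apply: reduces_modp_add (reduces_modp_nat k).
Qed.

Lemma reduces_modp_dwork_term (lam : int) j : (p %% 4 = 1)%N -> ~~ (p %| lam)%Z -> (j < p)%N ->
  reduces_modp (dwork_term (lam%:~R : rat) j) (dwork_term (lam%:~R : 'F_p) j).
Proof.
move=> p_mod4 p_ndvd_lam lt_jp.
have red_quarter (a : nat) : reduces_modp (a%:R / 4%:R) (a%:R / 4%:R).
  apply: reduces_modp_mul (reduces_modp_nat a) _.
  exact: reduces_modp_inv (reduces_modp_nat 4) (four_Fp_neq0 p_pr p_mod4).
have fact0 : (j`!)%:R != 0 :> 'F_p by rewrite -(dvdn_pcharf (pchar_Fp p_pr)) prime_ndvd_fact.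
have lam0 : (lam%:~R : 'F_p) != 0 by rewrite intr_Fp_eq0.
rewrite /dwork_term -[in 1 / _](mulr1n 1) -[in 1 / 4%:R : 'F_p](mulr1n 1).
apply: reduces_modp_mul; last first.
  by apply: reduces_modp_inv (expf_neq0 _ lam0); apply/reduces_modp_exp/reduces_modp_int.
apply: reduces_modp_mul; last first.
  by apply: reduces_modp_inv (expf_neq0 _ fact0); apply/reduces_modp_exp/reduces_modp_nat.
by do 2?apply: reduces_modp_mul; apply: reduces_modp_pochr (red_quarter _).
Qed.

Lemma reduces_modp_dwork_trace (lam : int) : (p %% 4 = 1)%N -> ~~ (p %| lam)%Z ->
  reduces_modp ((dwork_count p lam)%:~R - (p ^ 2)%:R - 1
                - \sum_(j < p) dwork_term (lam%:~R : rat) j) 0.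
Proof.
move=> p_mod4 p_ndvd_lam.
have lam0 : (lam%:~R : 'F_p) != 0 by rewrite intr_Fp_eq0.
have -> : 0 = (dwork_count p lam)%:~R - (p ^ 2)%:R - 1 - \sum_(j < p) dwork_term (lam%:~R : 'F_p) j.
  by rewrite -card_dwork_modp // natrX (pcharf0 (pchar_Fp p_pr)) expr0n subr0 subrr.
apply: reduces_modp_add; last apply: reduces_modp_opp.
  apply: reduces_modp_add; last exact: reduces_modp_opp (reduces_modp_nat 1).
  apply: reduces_modp_add; last exact: reduces_modp_opp (reduces_modp_nat _).
  exact: reduces_modp_int.
apply: (@reduces_modp_sum _ (dwork_term (lam%:~R : rat) \o val) (dwork_term _ \o val)) => j.
exact: reduces_modp_dwork_term p_mod4 p_ndvd_lam (ltn_ord j).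
Qed.

End ReductionModp.

Theorem theorem4 (p : nat) (lam : int) :
  prime p -> (p %% 4 = 1)%N -> ~~ ((p:int) %| lam)%Z ->
  exists r : rat, coprime `|denq r|%N p /\
    ((dwork_count p lam)%:~R - (p ^ 2)%:R - 1 : rat)
    - \sum_(j < p) (poch (1/4) j * poch (2/4) j * poch (3/4) j
                    / (j`!)%:R ^+ 3 * (lam%:~R) ^- (4 * j))
    = p%:R * r.
Proof.
move=> p_pr p_mod4 p_ndvd_lam.
apply: (reduces_modp0 p_pr).
exact (reduces_modp_dwork_trace p_pr p_mod4 p_ndvd_lam).
Qed.
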